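(* The region $\Phi_{B_b}$ is contiguous along both the $p_1$ and $p_2$ dimensions; $\Phi_{B_1}$ is contiguous along the $p_1$ dimension; and $\Phi_{B_2}$ is contiguous along the $p_2$ dimension.
   Context: Fix parameters $0\le\lambda_0\le\lambda_1\le 1$, a discount factor $\beta\in[0,1)$, and rates $0<R_l<R_h<2R_l$. Let $\alpha=\lambda_1-\lambda_0$ and $T(p)=\alpha p+\lambda_0$. The model consists of two independent, identical Gilbert–Elliott channels with $\Pr[\text{good}\mid\text{good}]=\lambda_1$ and $\Pr[\text{good}\mid\text{bad}]=\lambda_0$. The belief state is $(p_1,p_2)\in[0,1]^2$, and there are three actions, $B_b$, $B_1$ and $B_2$. Let $V:[0,1]^2\to\mathbb R$ be the optimal expected total discounted reward, i.e. the unique bounded function satisfying $V=\max\{V_{B_b},V_{B_1},V_{B_2}\}$, where $V_{B_b}(p_1,p_2)=p_1R_l+p_2R_l+\beta[(1-p_1)(1-p_2)V(\lambda_0,\lambda_0)+p_1(1-p_2)V(\lambda_1,\lambda_0)+(1-p_1)p_2V(\lambda_0,\lambda_1)+p_1p_2V(\lambda_1,\lambda_1)]$, $V_{B_1}(p_1,p_2)=p_1R_h+\beta[(1-p_1)V(\lambda_0,T(p_2))+p_1V(\lambda_1,T(p_2))]$, $V_{B_2}(p_1,p_2)=p_2R_h+\beta[(1-p_2)V(T(p_1),\lambda_0)+p_2V(T(p_1),\lambda_1)]$. For $a\in\{B_b,B_1,B_2\}$, the decision region is $\Phi_a=\{(p_1,p_2)\in[0,1]^2: V(p_1,p_2)=V_a(p_1,p_2)\}$.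 A set $\Phi$ is contiguous along the $p_1$ dimension if $(x_1,p_2)\in\Phi$ and $(x_2,p_2)\in\Phi$ imply $(x,p_2)\in\Phi$ for all $x\in[x_1,x_2]$. Contiguity along the $p_2$ dimension is defined analogously. *)

From Stdlib Require Import Reals Lra.
Open Scope R_scope.

(* Belief update of an unobserved channel: T(p) = alpha p + lambda0, alpha = lambda1 - lambda0. *)
Definition Tupd (l0 l1 p : R) : R := (l1 - l0) * p + l0.

Definition in01 (x : R) : Prop := 0 <= x <= 1.

Definition V_Bb (l0 l1 beta Rl : R) (V : R -> R -> R) (p1 p2 : R) : R :=
  p1 * Rl + p2 * Rl
  + beta * ((1 - p1) * (1 - p2) * V l0 l0 + p1 * (1 - p2) * V l1 l0
            + (1 - p1) * p2 * V l0 l1 + p1 * p2 * V l1 l1).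

Definition V_B1 (l0 l1 beta Rh : R) (V : R -> R -> R) (p1 p2 : R) : R :=
  p1 * Rh + beta * ((1 - p1) * V l0 (Tupd l0 l1 p2) + p1 * V l1 (Tupd l0 l1 p2)).

Definition V_B2 (l0 l1 beta Rh : R) (V : R -> R -> R) (p1 p2 : R) : R :=
  p2 * Rh + beta * ((1 - p2) * V (Tupd l0 l1 p1) l0 + p2 * V (Tupd l0 l1 p1) l1).

Definition bounded_on_sq (V : R -> R -> R) : Prop :=
  exists M : R, forall p1 p2, in01 p1 -> in01 p2 -> Rabs (V p1 p2) <= M.

Definition bellman (l0 l1 beta Rl Rh : R) (V : R -> R -> R) : Prop :=
  forall p1 p2, in01 p1 -> in01 p2 ->
    V p1 p2 = Rmax (V_Bb l0 l1 beta Rl V p1 p2)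
                   (Rmax (V_B1 l0 l1 beta Rh V p1 p2) (V_B2 l0 l1 beta Rh V p1 p2)).

Definition region (V Va : R -> R -> R) (p1 p2 : R) : Prop :=
  in01 p1 /\ in01 p2 /\ V p1 p2 = Va p1 p2.

Definition contiguous_p1 (Phi : R -> R -> Prop) : Prop :=
  forall x1 x2 p2 x, Phi x1 p2 -> Phi x2 p2 -> x1 <= x <= x2 -> Phi x p2.

Definition contiguous_p2 (Phi : R -> R -> Prop) : Prop :=
  forall p1 y1 y2 y, Phi p1 y1 -> Phi p1 y2 -> y1 <= y <= y2 -> Phi p1 y.

From Stdlib Require Import Reals Lra.
Open Scope R_scope.

(* The value function V is convex in p1 for every fixed p2.
   To see this, measure how far V is from convex by a "chord slack" K: the
   value at x in [x1,x2] exceeds the chord through x1, x2 by at most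
   K (x2 - x1).  A bounded V has some finite slack, and one Bellman step
   multiplies the slack by beta: the actions B_b and B_1 are affine in p1,
   while B_2 is a nonnegative combination (total weight beta) of V composed
   with the affine map T, which cannot increase the slack.  Iterating, the
   slack is below beta^n C for every n, hence zero.
   An action value that is affine in p1 and lies below a convex V touches V
   on an interval, which gives contiguity along p1 for B_b and B_1.  The
   p2 statements follow by exchanging the two channels, which maps the
   Bellman equation to itself and swaps B_1 with B_2. *)

Definition chord_below (f : R -> R) (K x1 x x2 : R) : Prop :=
  (x2 - x1) * f x <= (x2 - x) * f x1 + (x - x1) * f x2 + K * (x2 - x1).

Definition chord_affine (f : R -> R) : Prop :=
  forall x1 x x2, (x2 - x1) * f x = (x2 - x) * f x1 + (x - x1) * f x2.

Definition convex_p1_upto (V : R -> R -> R) (K : R) : Prop :=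
  forall p2 x1 x x2, in01 p2 -> in01 x1 -> in01 x2 -> x1 <= x <= x2 ->
    chord_below (fun p => V p p2) K x1 x x2.

Definition swap (V : R -> R -> R) : R -> R -> R := fun a b => V b a.

Lemma in01_between (x1 x x2 : R) : in01 x1 -> in01 x2 -> x1 <= x <= x2 -> in01 x.
Proof. unfold in01; lra. Qed.

Lemma Rabs_le_bounds (v M : R) : Rabs v <= M -> -M <= v <= M.
Proof.
  intro H; pose proof (Rle_abs v); pose proof (Rle_abs (- v)).
  rewrite Rabs_Ropp in *; lra.
Qed.

Lemma Rmax3_cases (v a b c : R) : v = Rmax a (Rmax b c) -> v = a \/ v = b \/ v = c.
Proof. unfold Rmax; destruct (Rle_dec b c); destruct (Rle_dec a _); intuition. Qed.

Lemma Rmax3_ge (a b c : R) :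
  a <= Rmax a (Rmax b c) /\ b <= Rmax a (Rmax b c) /\ c <= Rmax a (Rmax b c).
Proof.
  pose proof (Rmax_l a (Rmax b c)); pose proof (Rmax_r a (Rmax b c)).
  pose proof (Rmax_l b c); pose proof (Rmax_r b c); lra.
Qed.

Lemma chord_below_affine (f : R -> R) (K x1 x x2 : R) :
  chord_affine f -> 0 <= K -> x1 <= x2 -> chord_below f K x1 x x2.
Proof. unfold chord_below; intros Hf HK Hx; rewrite (Hf x1 x x2); nra. Qed.

(* Precomposition with a nondecreasing affine map keeps the slack: the image
   interval is only shorter, by the same factor on both sides. *)
Lemma chord_below_comp_affine (f : R -> R) (a b K x1 x x2 : R) :
  0 <= a -> 0 <= K -> x1 <= x2 ->
  chord_below f K (a * x1 + b) (a * x + b) (a * x2 + b) ->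
  chord_below (fun p => f (a * p + b)) K x1 x x2.
Proof.
  unfold chord_below; intros Ha HK Hx H.
  destruct (Req_dec a 0) as [->|Ha0].
  - rewrite !Rmult_0_l; nra.
  - apply (Rmult_le_reg_l a); [lra|].
    replace (a * x2 + b - (a * x1 + b)) with (a * (x2 - x1)) in H by ring.
    replace (a * x2 + b - (a * x + b)) with (a * (x2 - x)) in H by ring.
    replace (a * x + b - (a * x1 + b)) with (a * (x - x1)) in H by ring.
    nra.
Qed.

Lemma chord_below_mix (f g : R -> R) (c beta w K x1 x x2 : R) :
  0 <= beta -> 0 <= w <= 1 ->
  chord_below f K x1 x x2 -> chord_below g K x1 x x2 ->
  chord_below (fun p => c + beta * ((1 - w) * f p + w * g p)) (beta * K) x1 x x2.
Proof.
  unfold chord_below; intros Hb Hw Hf Hg.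
  assert (H1 : 0 <= beta * (1 - w)) by nra.
  assert (H2 : 0 <= beta * w) by nra.
  pose proof (Rmult_le_compat_l _ _ _ H1 Hf).
  pose proof (Rmult_le_compat_l _ _ _ H2 Hg).
  nra.
Qed.

Lemma chord_below_dominated (f g : R -> R) (K x1 x x2 : R) :
  x1 <= x <= x2 -> f x = g x -> f x1 <= g x1 -> f x2 <= g x2 ->
  chord_below f K x1 x x2 -> chord_below g K x1 x x2.
Proof.
  unfold chord_below; intros Hx Ex H1 H2 Hf; rewrite <- Ex.
  assert (0 <= x2 - x) by lra; assert (0 <= x - x1) by lra.
  pose proof (Rmult_le_compat_l _ _ _ H H1).
  pose proof (Rmult_le_compat_l _ _ _ H0 H2).
  lra.
Qed.

Lemma le_0_of_geometric_bound (beta a c : R) :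
  0 <= beta < 1 -> (forall n, a <= beta ^ n * c) -> a <= 0.
Proof.
  intros Hb Ha; apply Rnot_lt_le; intro Hpos.
  assert (Hc : 0 < Rabs c + 1) by (pose proof (Rabs_pos c); lra).
  destruct (pow_lt_1_zero beta ltac:(rewrite Rabs_right; lra) (a / (Rabs c + 1))
              ltac:(apply Rdiv_lt_0_compat; lra)) as [N HN].
  specialize (HN N (le_n N)); rewrite Rabs_right in HN by (apply Rle_ge, pow_le; lra).
  apply (Rmult_lt_compat_r (Rabs c + 1)) in HN; [|exact Hc].
  unfold Rdiv in HN; rewrite Rmult_assoc, Rinv_l, Rmult_1_r in HN by lra.
  pose proof (Ha N); pose proof (pow_le beta N (proj1 Hb)); pose proof (Rle_abs c).
  nra.
Qed.

Lemma convex_p1_upto_bounded (V : R -> R -> R) (M : R) :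
  (forall p1 p2, in01 p1 -> in01 p2 -> Rabs (V p1 p2) <= M) -> convex_p1_upto V (2 * M).
Proof.
  intros HM p2 x1 x x2 Hp H1 H2 Hx.
  pose proof (HM x p2 (in01_between _ _ _ H1 H2 Hx) Hp) as A.
  pose proof (HM x1 p2 H1 Hp) as A1; pose proof (HM x2 p2 H2 Hp) as A2.
  apply Rabs_le_bounds in A; apply Rabs_le_bounds in A1; apply Rabs_le_bounds in A2.
  assert (Hr : 0 <= x2 - x) by lra; assert (Hl : 0 <= x - x1) by lra.
  assert (Hw : 0 <= x2 - x1) by lra.
  pose proof (Rmult_le_compat_l _ _ _ Hr (proj1 A1)).
  pose proof (Rmult_le_compat_l _ _ _ Hl (proj1 A2)).
  pose proof (Rmult_le_compat_l _ _ _ Hw (proj2 A)).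
  unfold chord_below; lra.
Qed.

(* An action value affine in p1 and below a p1-convex V has a p1-contiguous
   decision region: on [x1,x2] the convex gap V - Va vanishes at both ends. *)
Lemma region_contiguous_p1 (V Va : R -> R -> R) :
  convex_p1_upto V 0 ->
  (forall p1 p2, in01 p1 -> in01 p2 -> Va p1 p2 <= V p1 p2) ->
  (forall p2, chord_affine (fun p => Va p p2)) ->
  contiguous_p1 (region V Va).
Proof.
  intros Hconv Hle Haff x1 x2 p2 x [H1 [Hp E1]] [H2 [_ E2]] Hx.
  assert (Hxin : in01 x) by exact (in01_between _ _ _ H1 H2 Hx).
  split; [exact Hxin | split; [exact Hp |]].
  pose proof (Hconv p2 x1 x x2 Hp H1 H2 Hx) as C; unfold chord_below in C.
  pose proof (Hle x p2 Hxin Hp) as Lx; pose proof (Haff p2 x1 x x2) as A; simpl in A.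
  rewrite E1, E2 in C.
  destruct (Req_dec x1 x2) as [<-|Hne].
  - replace x with x1 by lra; exact E1.
  - apply Rle_antisym; [|exact Lx].
    apply (Rmult_le_reg_l (x2 - x1)); lra.
Qed.

Section Bellman.

Variables (l0 l1 beta Rl Rh : R) (V : R -> R -> R).
Hypotheses (hl0 : 0 <= l0) (hl01 : l0 <= l1) (hl1 : l1 <= 1).
Hypotheses (hb0 : 0 <= beta) (hb1 : beta < 1).
Hypothesis hbell : bellman l0 l1 beta Rl Rh V.

Lemma action_le_value (p1 p2 : R) : in01 p1 -> in01 p2 ->
  V_Bb l0 l1 beta Rl V p1 p2 <= V p1 p2 /\ V_B1 l0 l1 beta Rh V p1 p2 <= V p1 p2 /\
  V_B2 l0 l1 beta Rh V p1 p2 <= V p1 p2.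
Proof. intros; rewrite (hbell p1 p2) by assumption; apply Rmax3_ge. Qed.

Lemma V_Bb_affine_p1 (p2 : R) : chord_affine (fun p => V_Bb l0 l1 beta Rl V p p2).
Proof. intros x1 x x2; unfold V_Bb; ring. Qed.

Lemma V_B1_affine_p1 (p2 : R) : chord_affine (fun p => V_B1 l0 l1 beta Rh V p p2).
Proof. intros x1 x x2; unfold V_B1; ring. Qed.

(* The action B_2 turns slack K of V into slack beta K, through the belief
   update T, which maps [0,1] into itself and preserves order. *)
Lemma V_B2_chord_below (K p2 x1 x x2 : R) :
  0 <= K -> convex_p1_upto V K -> in01 p2 -> in01 x1 -> in01 x2 -> x1 <= x <= x2 ->
  chord_below (fun p => V_B2 l0 l1 beta Rh V p p2) (beta * K) x1 x x2.
Proof.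
  intros HK Hconv Hp H1 H2 Hx.
  assert (HT : forall y, in01 y -> in01 (Tupd l0 l1 y)) by (unfold in01, Tupd; intros; nra).
  assert (Hmono : Tupd l0 l1 x1 <= Tupd l0 l1 x <= Tupd l0 l1 x2) by (unfold Tupd; nra).
  assert (Hq : forall q, in01 q -> chord_below (fun p => V (Tupd l0 l1 p) q) K x1 x x2).
  { intros q Hq.
    apply (chord_below_comp_affine (fun y => V y q)); [lra | exact HK | lra |].
    exact (Hconv q _ _ _ Hq (HT _ H1) (HT _ H2) Hmono). }
  apply chord_below_mix; [exact hb0 | exact Hp | apply Hq | apply Hq]; unfold in01; lra.
Qed.

Lemma bellman_contracts_slack (K : R) :
  0 <= K -> convex_p1_upto V K -> convex_p1_upto V (beta * K).
Proof.
  intros HK Hconv p2 x1 x x2 Hp H1 H2 Hx.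
  assert (Hxin : in01 x) by exact (in01_between _ _ _ H1 H2 Hx).
  assert (HbK : 0 <= beta * K) by nra.
  destruct (action_le_value x1 p2 H1 Hp) as [a1 [b1 c1]].
  destruct (action_le_value x2 p2 H2 Hp) as [a2 [b2 c2]].
  destruct (Rmax3_cases _ _ _ _ (hbell x p2 Hxin Hp)) as [E|[E|E]].
  - apply (chord_below_dominated (fun p => V_Bb l0 l1 beta Rl V p p2));
      [exact Hx | symmetry; exact E | exact a1 | exact a2 |].
    apply chord_below_affine; [apply V_Bb_affine_p1 | exact HbK | lra].
  - apply (chord_below_dominated (fun p => V_B1 l0 l1 beta Rh V p p2));
      [exact Hx | symmetry; exact E | exact b1 | exact b2 |].
    apply chord_below_affine; [apply V_B1_affine_p1 | exact HbK | lra].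
  - apply (chord_below_dominated (fun p => V_B2 l0 l1 beta Rh V p p2));
      [exact Hx | symmetry; exact E | exact c1 | exact c2 |].
    now apply V_B2_chord_below.
Qed.

Lemma value_convex_p1 : bounded_on_sq V -> convex_p1_upto V 0.
Proof.
  intros [M HM] p2 x1 x x2 Hp H1 H2 Hx.
  assert (HM0 : 0 <= 2 * M) by (pose proof (HM p2 p2 Hp Hp); pose proof (Rabs_pos (V p2 p2)); lra).
  assert (Hn : forall n, convex_p1_upto V (beta ^ n * (2 * M))).
  { induction n as [|n IH]; simpl.
    - rewrite Rmult_1_l; exact (convex_p1_upto_bounded V M HM).
    - rewrite Rmult_assoc; apply bellman_contracts_slack; [|exact IH].
      apply Rmult_le_pos; [apply pow_le|]; lra. }
  unfold chord_below; rewrite Rmult_0_l, Rplus_0_r.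
  apply Rminus_le, (le_0_of_geometric_bound beta _ (2 * M * (x2 - x1))); [lra|].
  intro n; pose proof (Hn n p2 x1 x x2 Hp H1 H2 Hx) as C; unfold chord_below in C; lra.
Qed.

End Bellman.

Lemma bellman_swap (l0 l1 beta Rl Rh : R) (V : R -> R -> R) :
  bellman l0 l1 beta Rl Rh V -> bellman l0 l1 beta Rl Rh (swap V).
Proof.
  intros Hbell p1 p2 H1 H2; unfold swap at 1; rewrite (Hbell p2 p1 H2 H1).
  replace (V_Bb l0 l1 beta Rl V p2 p1) with (V_Bb l0 l1 beta Rl (swap V) p1 p2)
    by (unfold V_Bb, swap; ring).
  change (V_B1 l0 l1 beta Rh V p2 p1) with (V_B2 l0 l1 beta Rh (swap V) p1 p2).
  change (V_B2 l0 l1 beta Rh V p2 p1) with (V_B1 l0 l1 beta Rh (swap V) p1 p2).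
  f_equal; apply Rmax_comm.
Qed.

Lemma bounded_swap (V : R -> R -> R) : bounded_on_sq V -> bounded_on_sq (swap V).
Proof. intros [M HM]; exists M; intros; apply HM; assumption. Qed.

Lemma contiguous_p2_of_swap (V Va : R -> R -> R) :
  contiguous_p1 (region (swap V) (swap Va)) -> contiguous_p2 (region V Va).
Proof.
  intros C p1 y1 y2 y [A1 [A2 A3]] [B1 [B2 B3]] Hy.
  destruct (C y1 y2 p1 y (conj A2 (conj A1 A3)) (conj B2 (conj B1 B3)) Hy) as [D1 [D2 D3]].
  exact (conj D2 (conj D1 D3)).
Qed.

Theorem theorem1 (l0 l1 beta Rl Rh : R) (V : R -> R -> R) :
  0 <= l0 -> l0 <= l1 -> l1 <= 1 ->
  0 <= beta -> beta < 1 ->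
  0 < Rl -> Rl < Rh -> Rh < 2 * Rl ->
  bounded_on_sq V ->
  bellman l0 l1 beta Rl Rh V ->
  contiguous_p1 (region V (V_Bb l0 l1 beta Rl V)) /\
  contiguous_p2 (region V (V_Bb l0 l1 beta Rl V)) /\
  contiguous_p1 (region V (V_B1 l0 l1 beta Rh V)) /\
  contiguous_p2 (region V (V_B2 l0 l1 beta Rh V)).
Proof.
  intros h0 h01 h1 hb0 hb1 _ _ _ HB Hbell.
  pose proof (value_convex_p1 l0 l1 beta Rl Rh V h0 h01 h1 hb0 hb1 Hbell HB) as Hconv.
  pose proof (value_convex_p1 l0 l1 beta Rl Rh (swap V) h0 h01 h1 hb0 hb1
                (bellman_swap _ _ _ _ _ _ Hbell) (bounded_swap _ HB)) as Hconv_swap.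
  pose proof (action_le_value l0 l1 beta Rl Rh V Hbell) as Hle.
  split; [|split; [|split]].
  - apply region_contiguous_p1; [exact Hconv | | apply V_Bb_affine_p1].
    intros p1 p2 H1 H2; apply (Hle p1 p2 H1 H2).
  - apply contiguous_p2_of_swap, region_contiguous_p1; [exact Hconv_swap | |].
    + intros p1 p2 H1 H2; apply (Hle p2 p1 H2 H1).
    + intros p2 y1 y y2; unfold swap, V_Bb; ring.
  - apply region_contiguous_p1; [exact Hconv | | apply V_B1_affine_p1].
    intros p1 p2 H1 H2; apply (Hle p1 p2 H1 H2).
  - apply contiguous_p2_of_swap, region_contiguous_p1; [exact Hconv_swap | |].
    + intros p1 p2 H1 H2; apply (Hle p2 p1 H2 H1).
    + intros p2 y1 y y2; unfold swap, V_B2; ring.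
Qed.
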